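(* If $G\subset\mathrm{Diff}^1_+([0,1])$ is a group without hyperbolic fixed points, then its completion $I^\infty(G)$ is contained in $\mathrm{Diff}^1_+([0,1])$ and is without hyperbolic fixed points.
   Context: $G\subset \mathrm{Diff}^1_+([0,1])$ is without hyperbolic fixed points if $Dg(x)=1$ for every $g\in G$ and every $x\in\mathrm{Fix}(g)$ (such a group has no linked pairs of successive fixed points). A homeomorphism $h\in\mathrm{Homeo}_+([0,1])$ is induced by $g$ if $h(x)\in\{x,g(x)\}$ for every $x\in[0,1]$. For a group $G$, $I(G)$ is the group generated by all homeomorphisms induced by elements of $G$; $I^0(G)=G$, $I^{n+1}(G)=I(I^n(G))$, and the completion is $I^\infty(G)=\bigcup_n I^n(G)$. *)

From Stdlib Require Import Reals.
Open Scope R_scope.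

(* Elements of Homeo/Diff of [0,1] are represented by functions R -> R;
   only their values on [0,1] matter. *)
Definition I01 (x : R) : Prop := 0 <= x <= 1.

Definition deriv01 (f : R -> R) (x l : R) : Prop :=
  limit1_in (fun y => (f y - f x) / (y - x)) (fun y => I01 y /\ y <> x) l x.

Definition cont01 (f : R -> R) (x : R) : Prop :=
  limit1_in f I01 (f x) x.

Definition homeo01 (f : R -> R) : Prop :=
  (forall x, I01 x -> cont01 f x) /\
  (forall x y, I01 x -> I01 y -> x < y -> f x < f y) /\
  f 0 = 0 /\ f 1 = 1.

Definition C1_01 (f : R -> R) : Prop :=
  exists Df : R -> R,
    (forall x, I01 x -> deriv01 f x (Df x)) /\
    (forall x, I01 x -> cont01 Df x).

Definition inv01 (g f : R -> R) : Prop :=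
  forall x, I01 x -> g (f x) = x /\ f (g x) = x.

Definition diff1 (f : R -> R) : Prop :=
  homeo01 f /\ C1_01 f /\ exists g, inv01 g f /\ C1_01 g.

Definition is_group (G : (R -> R) -> Prop) : Prop :=
  G (fun x => x) /\
  (forall f g, G f -> G g -> G (fun x => f (g x))) /\
  (forall f, G f -> exists g, G g /\ inv01 g f).

Definition no_hyperbolic (G : (R -> R) -> Prop) : Prop :=
  forall g x, G g -> I01 x -> g x = x -> deriv01 g x 1.

Definition induced (h g : R -> R) : Prop :=
  homeo01 h /\ forall x, I01 x -> h x = x \/ h x = g x.

Inductive gen_group (S : (R -> R) -> Prop) : (R -> R) -> Prop :=
| gen_base : forall f, S f -> gen_group S f
| gen_id : gen_group S (fun x => x)
| gen_comp : forall f g, gen_group S f -> gen_group S g ->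
    gen_group S (fun x => f (g x))
| gen_inv : forall f g, gen_group S f -> inv01 g f -> gen_group S g.

Definition Iop (G : (R -> R) -> Prop) : (R -> R) -> Prop :=
  gen_group (fun h => exists g, G g /\ induced h g).

Fixpoint Iter (n : nat) (G : (R -> R) -> Prop) : (R -> R) -> Prop :=
  match n with
  | O => G
  | S n => Iop (Iter n G)
  end.

Definition Iinf (G : (R -> R) -> Prop) (f : R -> R) : Prop :=
  exists n, Iter n G f.

From Stdlib Require Import Reals Lra ClassicalEpsilon.
Open Scope R_scope.

(* Call f "tangent to G" if f is a C^1 diffeomorphism and at every point x of
   [0,1] some g in G has the same value and the same derivative as f at x.
   Tangency to G is the invariant of the proof:
   - elements of G are tangent to G, and tangency is preserved by composition
     (chain rule) and inversion (derivatives of inverses are reciprocal);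
   - a map h induced by a map g tangent to G is tangent to G: near a point
     moved by g, h coincides with g or with the identity, while at a point
     fixed by g the derivative of g is 1, so the piecewise derivative of h
     (1 where h fixes, Dg elsewhere) is continuous and nowhere zero, and the
     inverse function theorem makes h a C^1 diffeomorphism;
   - at a fixed point a map tangent to G shares its derivative with an element
     of G fixing that point, hence that derivative is 1.
   By induction every element of every I^n(G) is tangent to G. *)

Lemma I01_0 : I01 0. Proof. unfold I01; lra. Qed.
Lemma I01_1 : I01 1. Proof. unfold I01; lra. Qed.

Lemma limit1_in_iff f D l x0 :
  limit1_in f D l x0 <->
  forall eps, eps > 0 -> exists alp, alp > 0 /\
    forall x, D x -> Rabs (x - x0) < alp -> Rabs (f x - l) < eps.
Proof.
  unfold limit1_in, limit_in; simpl; unfold Rdist; split; intros H eps He;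
    destruct (H eps He) as [a [Ha H']]; exists a; split; auto; intros; try apply H'; tauto.
Qed.

Lemma limit1_in_subdomain f D D' l x0 :
  (forall x, D' x -> D x) -> limit1_in f D l x0 -> limit1_in f D' l x0.
Proof.
  rewrite !limit1_in_iff; intros HD H eps He.
  destruct (H eps He) as [a [Ha H']]; exists a; split; auto.
Qed.

Lemma limit1_in_local_ext f g D l x0 r :
  r > 0 -> (forall x, D x -> Rabs (x - x0) < r -> f x = g x) ->
  limit1_in f D l x0 -> limit1_in g D l x0.
Proof.
  rewrite !limit1_in_iff; intros Hr HE H eps He; destruct (H eps He) as [a [Ha H']].
  exists (Rmin a r); split; [apply Rmin_pos; lra|].
  intros x Dx Hx. pose proof (Rmin_l a r); pose proof (Rmin_r a r).
  rewrite <- HE by (auto; lra). apply H'; auto; lra.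
Qed.

Lemma limit1_in_const D c x0 : limit1_in (fun _ => c) D c x0.
Proof.
  rewrite limit1_in_iff; intros eps He; exists 1; split; [lra|].
  intros; rewrite Rminus_diag, Rabs_R0; lra.
Qed.

Lemma cont01_comp f g x :
  (forall y, I01 y -> I01 (g y)) -> cont01 g x -> cont01 f (g x) ->
  cont01 (fun y => f (g y)) x.
Proof.
  unfold cont01; intros Hg Cg Cf.
  eapply limit1_in_subdomain; [| exact (limit_comp g f I01 I01 (g x) (f (g x)) x Cg Cf)].
  intros y Iy; split; auto.
Qed.

Lemma cont01_mul f g x : cont01 f x -> cont01 g x -> cont01 (fun y => f y * g y) x.
Proof. unfold cont01; intros; apply limit_mul; auto. Qed.

Lemma cont01_inv f x : cont01 f x -> f x <> 0 -> cont01 (fun y => / f y) x.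
Proof. unfold cont01; intros; apply limit_inv; auto. Qed.

Lemma homeo01_le f x y : homeo01 f -> I01 x -> I01 y -> x <= y -> f x <= f y.
Proof. intros [_ [Hmono _]] Ix Iy [Hlt| ->]; [left; auto|lra]. Qed.

Lemma homeo01_maps_I01 f x : homeo01 f -> I01 x -> I01 (f x).
Proof.
  intros Hf Ix. pose proof Hf as [_ [_ [H0 H1]]].
  pose proof (homeo01_le f 0 x Hf I01_0 Ix). pose proof (homeo01_le f x 1 Hf Ix I01_1).
  unfold I01 in *; lra.
Qed.

Lemma homeo01_inj f x y : homeo01 f -> I01 x -> I01 y -> f x = f y -> x = y.
Proof.
  intros [_ [Hmono _]] Ix Iy E. destruct (Rtotal_order x y) as [L|[L|L]]; auto.
  - specialize (Hmono _ _ Ix Iy L); lra.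
  - specialize (Hmono _ _ Iy Ix L); lra.
Qed.

Lemma homeo01_comp f g : homeo01 f -> homeo01 g -> homeo01 (fun x => f (g x)).
Proof.
  intros Hf Hg. pose proof Hf as [Cf [Mf [F0 F1]]]. pose proof Hg as [Cg [Mg [G0 G1]]].
  split; [|split; [|split]].
  - intros x Ix. apply cont01_comp; auto.
    + intros; apply homeo01_maps_I01; auto.
    + apply Cf, homeo01_maps_I01; auto.
  - intros x y Ix Iy L. apply Mf; try apply homeo01_maps_I01; auto.
  - rewrite G0; auto.
  - rewrite G1; auto.
Qed.

(* The projection of R onto [0,1]; it extends maps on [0,1] to R, so that the
   intermediate value theorem of the standard library applies. *)
Definition clamp (t : R) : R := Rmax 0 (Rmin 1 t).

Lemma clamp_I01 t : I01 (clamp t).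
Proof. unfold clamp, I01, Rmax, Rmin; repeat destruct Rle_dec; lra. Qed.

Lemma clamp_id t : I01 t -> clamp t = t.
Proof. unfold clamp, I01, Rmax, Rmin; intros; repeat destruct Rle_dec; lra. Qed.

Lemma clamp_lipschitz s t : Rabs (clamp s - clamp t) <= Rabs (s - t).
Proof. unfold clamp, Rmax, Rmin; repeat destruct Rle_dec; unfold Rabs; repeat destruct Rcase_abs; lra. Qed.

Lemma homeo01_surj f y : homeo01 f -> I01 y -> exists x, I01 x /\ f x = y.
Proof.
  intros Hf Iy. pose proof Hf as [Cf [_ [H0 H1]]].
  pose (F := fun t => f (clamp t) - y).
  assert (CF : forall a, continuity_pt F a).
  { intro a. unfold continuity_pt, continue_in, D_x, no_cond. rewrite limit1_in_iff.
    intros eps He.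
    destruct (proj1 (limit1_in_iff _ _ _ _) (Cf _ (clamp_I01 a)) eps He) as [al [Ha Hal]].
    exists al; split; auto. intros t _ Ht. unfold F.
    replace (f (clamp t) - y - (f (clamp a) - y)) with (f (clamp t) - f (clamp a)) by ring.
    apply Hal; [apply clamp_I01|]. eapply Rle_lt_trans; [apply clamp_lipschitz|exact Ht]. }
  assert (Sign : F 0 * F 1 <= 0).
  { unfold F; rewrite !clamp_id, H0, H1 by (apply I01_0 || apply I01_1).
    unfold I01 in Iy; nra. }
  destruct (IVT_cor F 0 1 CF ltac:(lra) Sign) as [z [Hz Fz]].
  exists z; split; [exact Hz|]. unfold F in Fz; rewrite clamp_id in Fz; auto; lra.
Qed.

Lemma homeo01_inverse f : homeo01 f -> exists k, inv01 k f.
Proof.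
  intros Hf.
  assert (Ex : forall y, exists x, I01 y -> I01 x /\ f x = y).
  { intro y. destruct (classic (I01 y)) as [Iy|Ny].
    - destruct (homeo01_surj f y Hf Iy) as [x Hx]; exists x; auto.
    - exists 0; intro; contradiction. }
  pose (k := fun y => proj1_sig (constructive_indefinite_description _ (Ex y))).
  assert (Hk : forall y, I01 y -> I01 (k y) /\ f (k y) = y).
  { intros y Iy. unfold k. destruct constructive_indefinite_description as [x Hx]; auto. }
  exists k. intros x Ix. split; [|apply Hk; auto].
  destruct (Hk (f x) (homeo01_maps_I01 f x Hf Ix)) as [Ik Ek].
  eapply homeo01_inj; eauto.
Qed.

Lemma I01_limit_point x : I01 x -> adhDa (fun y => I01 y /\ y <> x) x.
Proof.
  unfold adhDa, I01, Rdist; intros Ix alp Ha.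
  pose (m := Rmin alp (1/2)).
  assert (m > 0) by (apply Rmin_pos; lra).
  assert (m <= 1/2) by apply Rmin_r. assert (m <= alp) by apply Rmin_l.
  destruct (Rle_dec x (1/2)).
  - exists (x + m/2). repeat split; try lra. rewrite Rabs_right; lra.
  - exists (x - m/2). repeat split; try lra. rewrite Rabs_left; lra.
Qed.

Lemma deriv01_unique f x l1 l2 : I01 x -> deriv01 f x l1 -> deriv01 f x l2 -> l1 = l2.
Proof. intros Ix H1 H2. eapply single_limit; eauto. apply I01_limit_point; auto. Qed.

(* Differentiability implies continuity: |f y - f x| <= (|l| + 1) |y - x| near x. *)
Lemma deriv01_cont f x l : deriv01 f x l -> cont01 f x.
Proof.
  unfold deriv01, cont01. rewrite !limit1_in_iff. intros H eps He.
  destruct (H 1 ltac:(lra)) as [a [Ha H']].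
  pose proof (Rabs_pos l).
  exists (Rmin a (eps / (Rabs l + 1))). split.
  { apply Rmin_pos; auto. apply Rdiv_lt_0_compat; lra. }
  intros y Iy Hy. destruct (Req_dec y x) as [->|Nyx].
  { rewrite Rminus_diag, Rabs_R0; lra. }
  assert (Hq := H' y (conj Iy Nyx) (Rlt_le_trans _ _ _ Hy (Rmin_l _ _))).
  assert (Hy2 := Rlt_le_trans _ _ _ Hy (Rmin_r _ _)).
  assert (Slope : Rabs ((f y - f x) / (y - x)) <= Rabs l + 1).
  { pose proof (Rabs_triang_inv ((f y - f x) / (y - x)) l). lra. }
  replace (f y - f x) with ((f y - f x) / (y - x) * (y - x)) by (field; lra).
  rewrite Rabs_mult.
  apply Rle_lt_trans with ((Rabs l + 1) * Rabs (y - x)).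
  - apply Rmult_le_compat_r; auto. apply Rabs_pos.
  - apply Rlt_le_trans with ((Rabs l + 1) * (eps / (Rabs l + 1))).
    + apply Rmult_lt_compat_l; lra.
    + right; field; lra.
Qed.

Lemma deriv01_id x : deriv01 (fun y => y) x 1.
Proof.
  unfold deriv01; rewrite limit1_in_iff; intros eps He; exists 1; split; [lra|].
  intros y [_ N] _. replace ((y - x) / (y - x) - 1) with 0 by (field; lra).
  rewrite Rabs_R0; lra.
Qed.

Lemma deriv01_ext f g x l :
  (forall y, I01 y -> f y = g y) -> I01 x -> deriv01 f x l -> deriv01 g x l.
Proof.
  unfold deriv01; intros E Ix H.
  apply (limit1_in_local_ext (fun y => (f y - f x) / (y - x)) _ _ _ _ 1); [lra| |exact H].
  intros y [Iy _] _. rewrite !E; auto.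
Qed.

(* Chain rule; g is a homeomorphism so that g y <> g x for y <> x. *)
Lemma deriv01_chain f g x a b :
  homeo01 g -> I01 x -> deriv01 g x b -> deriv01 f (g x) a ->
  deriv01 (fun y => f (g y)) x (a * b).
Proof.
  intros Hg Ix Dg Df. unfold deriv01 in *.
  assert (Ng : forall y, I01 y -> y <> x -> g y <> g x).
  { intros y Iy N E; apply N; eapply homeo01_inj; eauto. }
  assert (Cg : limit1_in g (fun y => I01 y /\ y <> x) (g x) x).
  { eapply limit1_in_subdomain; [|exact (deriv01_cont g x b Dg)]. intros y [H _]; exact H. }
  assert (Hc : limit1_in (fun y => (f (g y) - f (g x)) / (g y - g x))
                         (fun y => I01 y /\ y <> x) a x).
  { eapply limit1_in_subdomain; [|exact (limit_comp _ _ _ _ _ _ _ Cg Df)].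
    intros y [Iy N]. split; split; auto. apply homeo01_maps_I01; auto. }
  apply (limit1_in_local_ext
           (fun y => (f (g y) - f (g x)) / (g y - g x) * ((g y - g x) / (y - x))) _ _ _ _ 1);
    [lra| |exact (limit_mul _ _ _ _ _ _ Hc Dg)].
  intros y [Iy N] _. pose proof (Ng y Iy N). field; split; lra.
Qed.

Lemma right_inverse_deriv f k y l m :
  homeo01 k -> (forall z, I01 z -> f (k z) = z) -> I01 y ->
  deriv01 f (k y) l -> deriv01 k y m -> l * m = 1.
Proof.
  intros Hk Ek Iy Df Dk.
  eapply deriv01_unique; [exact Iy| |apply deriv01_id].
  eapply deriv01_ext; [exact Ek|exact Iy|]. apply deriv01_chain; auto.
Qed.

Section Inverse.
Variables f k : R -> R.
Hypothesis Hf : homeo01 f.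
Hypothesis Hk : inv01 k f.

Lemma inv01_maps_I01 y : I01 y -> I01 (k y).
Proof.
  intros Iy. destruct (homeo01_surj f y Hf Iy) as [x [Ix <-]].
  rewrite (proj1 (Hk x Ix)); auto.
Qed.

Lemma inv01_inj y1 y2 : I01 y1 -> I01 y2 -> k y1 = k y2 -> y1 = y2.
Proof. intros I1 I2 E. rewrite <- (proj2 (Hk y1 I1)), <- (proj2 (Hk y2 I2)), E; auto. Qed.

(* k is increasing, in the form needed for continuity. *)
Lemma inv01_lt y c : I01 y -> I01 c -> y < f c -> k y < c.
Proof.
  intros Iy Ic Hy. destruct (Rlt_le_dec (k y) c) as [|Hc]; auto.
  pose proof (homeo01_le f _ _ Hf Ic (inv01_maps_I01 y Iy) Hc) as Hle.
  rewrite (proj2 (Hk y Iy)) in Hle. lra.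
Qed.

Lemma inv01_gt y c : I01 y -> I01 c -> f c < y -> c < k y.
Proof.
  intros Iy Ic Hy. destruct (Rlt_le_dec c (k y)) as [|Hc]; auto.
  pose proof (homeo01_le f _ _ Hf (inv01_maps_I01 y Iy) Ic Hc) as Hle.
  rewrite (proj2 (Hk y Iy)) in Hle. lra.
Qed.

(* k is continuous: images of a small neighbourhood of y0 stay between the
   preimages of two points of [0,1] eps-close to k y0. *)
Lemma inv01_cont y0 : I01 y0 -> cont01 k y0.
Proof.
  intros Iy0. unfold cont01; rewrite limit1_in_iff; intros eps He.
  set (x0 := k y0).
  assert (Ix0 : I01 x0) by (apply inv01_maps_I01; auto).
  assert (Fx0 : f x0 = y0) by (apply Hk; auto).
  assert (Up : exists d, d > 0 /\ forall y, I01 y -> y < y0 + d -> k y < x0 + eps).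
  { destruct (Rlt_le_dec x0 1) as [Lt|Ge].
    - set (c := Rmin 1 (x0 + eps/2)).
      assert (Ic : I01 c) by (unfold c, Rmin, I01 in *; destruct Rle_dec; lra).
      assert (Hc : x0 < c < x0 + eps) by (unfold c, Rmin; destruct Rle_dec; lra).
      exists (f c - y0). split.
      + rewrite <- Fx0. pose proof (proj1 (proj2 Hf) x0 c Ix0 Ic (proj1 Hc)); lra.
      + intros y Iy Hy. pose proof (inv01_lt y c Iy Ic ltac:(lra)); lra.
    - exists 1; split; [lra|]. intros y Iy _.
      pose proof (inv01_maps_I01 y Iy); unfold I01 in *; lra. }
  assert (Down : exists d, d > 0 /\ forall y, I01 y -> y0 - d < y -> x0 - eps < k y).
  { destruct (Rlt_le_dec 0 x0) as [Lt|Ge].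
    - set (c := Rmax 0 (x0 - eps/2)).
      assert (Ic : I01 c) by (unfold c, Rmax, I01 in *; destruct Rle_dec; lra).
      assert (Hc : x0 - eps < c < x0) by (unfold c, Rmax; destruct Rle_dec; lra).
      exists (y0 - f c). split.
      + rewrite <- Fx0. pose proof (proj1 (proj2 Hf) c x0 Ic Ix0 (proj2 Hc)); lra.
      + intros y Iy Hy. pose proof (inv01_gt y c Iy Ic ltac:(lra)); lra.
    - exists 1; split; [lra|]. intros y Iy _.
      pose proof (inv01_maps_I01 y Iy); unfold I01 in *; lra. }
  destruct Up as [d1 [D1 Up]]. destruct Down as [d2 [D2 Down]].
  exists (Rmin d1 d2); split; [apply Rmin_pos; auto|].
  intros y Iy Hy. apply Rabs_def2 in Hy.
  pose proof (Rmin_l d1 d2); pose proof (Rmin_r d1 d2).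
  specialize (Up y Iy ltac:(lra)); specialize (Down y Iy ltac:(lra)).
  apply Rabs_def1; lra.
Qed.

Lemma inv01_homeo : homeo01 k.
Proof.
  pose proof Hf as [_ [_ [H0 H1]]].
  split; [|split; [|split]].
  - exact inv01_cont.
  - intros y1 y2 I1 I2 L. apply inv01_lt; auto.
    + apply inv01_maps_I01; auto.
    + rewrite (proj2 (Hk y2 I2)); auto.
  - rewrite <- H0 at 1. apply Hk, I01_0.
  - rewrite <- H1 at 1. apply Hk, I01_1.
Qed.

Lemma inv01_deriv y0 l : I01 y0 -> deriv01 f (k y0) l -> l <> 0 -> deriv01 k y0 (/ l).
Proof.
  intros Iy0 Df Nl. unfold deriv01 in *.
  assert (Ck : limit1_in k (fun y => I01 y /\ y <> y0) (k y0) y0).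
  { eapply limit1_in_subdomain; [|apply inv01_cont; auto]. intros y [H _]; exact H. }
  assert (Hc : limit1_in (fun y => (f (k y) - f (k y0)) / (k y - k y0))
                         (fun y => I01 y /\ y <> y0) l y0).
  { eapply limit1_in_subdomain; [|exact (limit_comp _ _ _ _ _ _ _ Ck Df)].
    intros y [Iy N]. split; split; auto.
    - apply inv01_maps_I01; auto.
    - intro E; apply N, inv01_inj; auto. }
  apply (limit1_in_local_ext (fun y => / ((f (k y) - f (k y0)) / (k y - k y0))) _ _ _ _ 1);
    [lra| |exact (limit_inv _ _ _ _ Hc Nl)].
  intros y [Iy N] _.
  assert (k y <> k y0) by (intro E; apply N, inv01_inj; auto).
  rewrite (proj2 (Hk _ Iy)), (proj2 (Hk _ Iy0)). field; split; lra.
Qed.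

Lemma inv01_C1 Df :
  (forall x, I01 x -> deriv01 f x (Df x)) -> (forall x, I01 x -> cont01 Df x) ->
  (forall x, I01 x -> Df x <> 0) -> C1_01 k.
Proof.
  intros Hd Hc Hnz.
  exists (fun y => / Df (k y)); split; intros y Iy; pose proof (inv01_maps_I01 y Iy).
  - apply inv01_deriv; auto.
  - apply cont01_inv; auto. apply cont01_comp; auto.
    + exact inv01_maps_I01.
    + apply inv01_cont; auto.
Qed.

End Inverse.

Lemma C1_01_ext f g : (forall y, I01 y -> f y = g y) -> C1_01 f -> C1_01 g.
Proof. intros E [D [H1 H2]]; exists D; split; auto. intros; eapply deriv01_ext; eauto. Qed.

Lemma C1_01_comp f g : C1_01 f -> C1_01 g -> homeo01 g -> C1_01 (fun x => f (g x)).
Proof.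
  intros [Df [Hf1 Hf2]] [Dg [Hg1 Hg2]] Hg.
  exists (fun x => Df (g x) * Dg x); split; intros x Ix; pose proof (homeo01_maps_I01 g x Hg Ix).
  - apply deriv01_chain; auto.
  - apply cont01_mul; auto. apply cont01_comp; auto.
    + intros; apply homeo01_maps_I01; auto.
    + eapply deriv01_cont; eauto.
Qed.

Lemma diff1_comp f g : diff1 f -> diff1 g -> diff1 (fun x => f (g x)).
Proof.
  intros [Hf [Cf [f' [If' Cf']]]] [Hg [Cg [g' [Ig' Cg']]]].
  split; [apply homeo01_comp; auto|split; [apply C1_01_comp; auto|]].
  exists (fun x => g' (f' x)); split.
  - intros x Ix. split.
    + rewrite (proj1 (If' _ (homeo01_maps_I01 g x Hg Ix))). apply Ig'; auto.
    + rewrite (proj2 (Ig' _ (inv01_maps_I01 f f' Hf If' x Ix))). apply If'; auto.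
  - apply C1_01_comp; auto. apply (inv01_homeo f); auto.
Qed.

Lemma diff1_inv f k : diff1 f -> inv01 k f -> diff1 k.
Proof.
  intros [Hf [Cf [f' [If' Cf']]]] Hk.
  split; [eapply inv01_homeo; eauto|split].
  - apply (C1_01_ext f'); auto. intros y Iy. destruct (homeo01_surj f y Hf Iy) as [x [Ix <-]].
    rewrite (proj1 (If' x Ix)), (proj1 (Hk x Ix)); auto.
  - exists f; split; auto. intros x Ix; split; apply Hk; auto.
Qed.

Lemma diff1_deriv f x : diff1 f -> I01 x -> exists l, deriv01 f x l.
Proof. intros [_ [[D [H _]] _]] Ix. exists (D x); auto. Qed.

Lemma diff1_deriv_nonzero f x l : diff1 f -> I01 x -> deriv01 f x l -> l <> 0.
Proof.
  intros [Hf [_ [f' [If' [Df' [Hd _]]]]]] Ix Dl.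
  assert (E : Df' (f x) * l = 1).
  { apply (right_inverse_deriv f' f x); auto.
    - intros z Iz; apply If'; auto.
    - apply Hd, homeo01_maps_I01; auto. }
  intro; subst; lra.
Qed.

Lemma diff1_of_deriv f Df :
  homeo01 f -> (forall x, I01 x -> deriv01 f x (Df x)) -> (forall x, I01 x -> cont01 Df x) ->
  (forall x, I01 x -> Df x <> 0) -> diff1 f.
Proof.
  intros Hf Hd Hc Hnz. destruct (homeo01_inverse f Hf) as [k Hk].
  split; [exact Hf|split; [exists Df; auto|exists k; split; auto]].
  apply (inv01_C1 f k Hf Hk Df); auto.
Qed.

(* Candidate derivative of a map h induced by g with derivative Dg:
   1 where h fixes the point, Dg elsewhere (where h agrees with g). *)
Definition induced_slope (h Dg : R -> R) (x : R) : R :=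
  if Req_EM_T (h x) x then 1 else Dg x.

Lemma induced_slope_cases h Dg y :
  (h y = y /\ induced_slope h Dg y = 1) \/ (h y <> y /\ induced_slope h Dg y = Dg y).
Proof. unfold induced_slope; destruct Req_EM_T; auto. Qed.

Section Induced.
Variables g Dg h : R -> R.
Hypothesis Hg : homeo01 g.
Hypothesis HDg : forall x, I01 x -> deriv01 g x (Dg x).
Hypothesis HCg : forall x, I01 x -> cont01 Dg x.
Hypothesis Hfix : forall x, I01 x -> g x = x -> Dg x = 1.
Hypothesis Hh : homeo01 h.
Hypothesis Hind : forall x, I01 x -> h x = x \/ h x = g x.

(* Near a point moved by g, h is either the identity or g (and then moves
   every point): by continuity, h y cannot jump between y and g y, which stay
   apart near x. *)
Lemma induced_near_moved_point x :
  I01 x -> g x <> x -> exists r, r > 0 /\ forall y, I01 y -> Rabs (y - x) < r ->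
    (h x = x -> h y = y) /\ (h x <> x -> h y = g y /\ g y <> y).
Proof.
  intros Ix Nx. set (d := Rabs (g x - x)).
  assert (Hd : d > 0) by (apply Rabs_pos_lt; lra).
  assert (Apart : forall z, Rabs (z - x) < d/3 -> Rabs (z - g x) < d/3 -> False).
  { intros z H1 H2. unfold d, Rabs in *; repeat destruct Rcase_abs; lra. }
  destruct (proj1 (limit1_in_iff _ _ _ _) (proj1 Hh x Ix) (d/3) ltac:(lra)) as [r1 [R1 Ch]].
  destruct (proj1 (limit1_in_iff _ _ _ _) (proj1 Hg x Ix) (d/3) ltac:(lra)) as [r2 [R2 Cg]].
  exists (Rmin (Rmin r1 r2) (d/3)); split; [repeat apply Rmin_pos; lra|].
  intros y Iy Hy.
  pose proof (Rmin_l (Rmin r1 r2) (d/3)); pose proof (Rmin_r (Rmin r1 r2) (d/3)).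
  pose proof (Rmin_l r1 r2); pose proof (Rmin_r r1 r2).
  specialize (Ch y Iy ltac:(lra)); specialize (Cg y Iy ltac:(lra)).
  assert (Hy3 : Rabs (y - x) < d/3) by lra.
  split; intro Hx.
  - destruct (Hind y Iy) as [|Ey]; auto. exfalso.
    apply (Apart (g y)); [rewrite <- Ey, <- Hx at 1|]; auto.
  - assert (Ex : h x = g x) by (destruct (Hind x Ix); tauto). rewrite Ex in Ch.
    destruct (Hind y Iy) as [Ey|Ey].
    + exfalso; apply (Apart y Hy3). rewrite <- Ey at 1; auto.
    + split; auto. intro Fy. apply (Apart y Hy3). rewrite <- Fy at 1; auto.
Qed.

(* At a point x fixed by g both branches of h have slope tending to 1. *)
Lemma induced_deriv_at_fixed x :
  I01 x -> g x = x -> deriv01 h x (induced_slope h Dg x).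
Proof.
  intros Ix Fx.
  assert (Hx : h x = x) by (destruct (Hind x Ix); congruence).
  destruct (induced_slope_cases h Dg x) as [[_ ->]|[Nx _]]; [|contradiction].
  pose proof (HDg x Ix) as D. unfold deriv01 in *. rewrite Hfix in D; auto.
  rewrite limit1_in_iff in *. intros eps He. destruct (D eps He) as [a [Ha Ha']].
  exists a; split; auto. intros y [Iy Ny] Hy. rewrite Hx.
  destruct (Hind y Iy) as [E|E]; rewrite E.
  - replace ((y - x) / (y - x) - 1) with 0 by (field; lra). rewrite Rabs_R0; lra.
  - replace (g y - x) with (g y - g x) by (rewrite Fx; ring). apply Ha'; auto.
Qed.

Lemma induced_deriv x : I01 x -> deriv01 h x (induced_slope h Dg x).
Proof.
  intros Ix. destruct (Req_dec (g x) x) as [Fx|Nx]; [apply induced_deriv_at_fixed; auto|].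
  destruct (induced_near_moved_point x Ix Nx) as [r [Hr L]]. unfold deriv01.
  destruct (induced_slope_cases h Dg x) as [[Hx ->]|[Hx ->]].
  - apply (limit1_in_local_ext (fun _ => 1) _ _ _ _ r); auto; [|apply limit1_in_const].
    intros y [Iy Ny] Hy. rewrite (proj1 (L y Iy Hy) Hx), Hx. field; lra.
  - apply (limit1_in_local_ext (fun y => (g y - g x) / (y - x)) _ _ _ _ r); auto; [|apply HDg; auto].
    intros y [Iy Ny] Hy. destruct (Hind x Ix) as [|Ex]; [contradiction|].
    rewrite (proj1 (proj2 (L y Iy Hy) Hx)), Ex; reflexivity.
Qed.

Lemma induced_slope_cont x : I01 x -> cont01 (induced_slope h Dg) x.
Proof.
  intros Ix. unfold cont01. destruct (Req_dec (g x) x) as [Fx|Nx].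
  - assert (Hx : h x = x) by (destruct (Hind x Ix); congruence).
    destruct (induced_slope_cases h Dg x) as [[_ ->]|[Nx _]]; [|contradiction].
    pose proof (HCg x Ix) as C. unfold cont01 in C. rewrite Hfix in C; auto.
    rewrite limit1_in_iff in *. intros eps He. destruct (C eps He) as [a [Ha Ha']].
    exists a; split; auto. intros y Iy Hy.
    destruct (induced_slope_cases h Dg y) as [[_ ->]|[_ ->]]; auto.
    rewrite Rminus_diag, Rabs_R0; lra.
  - destruct (induced_near_moved_point x Ix Nx) as [r [Hr L]].
    destruct (induced_slope_cases h Dg x) as [[Hx ->]|[Hx ->]].
    + apply (limit1_in_local_ext (fun _ => 1) _ _ _ _ r); auto; [|apply limit1_in_const].
      intros y Iy Hy. destruct (induced_slope_cases h Dg y) as [[_ ->]|[Ny _]]; auto.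
      exfalso; apply Ny, (proj1 (L y Iy Hy) Hx).
    + apply (limit1_in_local_ext Dg _ _ _ _ r); auto; [|apply HCg; auto].
      intros y Iy Hy. destruct (proj2 (L y Iy Hy) Hx) as [E1 E2].
      destruct (induced_slope_cases h Dg y) as [[Ey _]|[_ ->]]; auto. congruence.
Qed.

End Induced.

Section Tangency.
Variable G : (R -> R) -> Prop.
Hypothesis HG : is_group G.
Hypothesis HdG : forall g, G g -> diff1 g.
Hypothesis HnG : no_hyperbolic G.

Definition tangent (f : R -> R) : Prop :=
  diff1 f /\ forall x, I01 x -> exists g, G g /\ g x = f x /\
    exists l, deriv01 f x l /\ deriv01 g x l.

Lemma tangent_of_G f : G f -> tangent f.
Proof.
  intros Gf. split; auto. intros x Ix. exists f; split; auto; split; auto.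
  destruct (diff1_deriv f x (HdG f Gf) Ix) as [l Hl]; exists l; auto.
Qed.

Lemma tangent_no_hyperbolic f x : tangent f -> I01 x -> f x = x -> deriv01 f x 1.
Proof.
  intros [_ Hf] Ix Fx. destruct (Hf x Ix) as [g [Gg [E [l [D1 D2]]]]].
  assert (l = 1) by (eapply deriv01_unique; eauto; apply HnG; auto; congruence).
  subst; auto.
Qed.

Lemma tangent_comp f g : tangent f -> tangent g -> tangent (fun x => f (g x)).
Proof.
  intros [Df Hf] [Dg Hg]. split; [apply diff1_comp; auto|]. intros x Ix.
  destruct (Hg x Ix) as [g0 [Gg0 [E0 [l2 [D2 D2']]]]].
  destruct (Hf (g x) (homeo01_maps_I01 g x (proj1 Dg) Ix)) as [f0 [Gf0 [E1 [l1 [D1 D1']]]]].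
  exists (fun y => f0 (g0 y)). split; [apply HG; auto|]. split; [congruence|].
  exists (l1 * l2); split; apply deriv01_chain; auto.
  - apply Dg.
  - apply (HdG g0 Gg0).
  - rewrite E0; auto.
Qed.

(* At y = f x, the inverse of f is matched by the inverse of the element of G
   matching f at x: both have derivative the reciprocal of the common one. *)
Lemma tangent_inv f k : tangent f -> inv01 k f -> tangent k.
Proof.
  intros [Df Hf] Hk. assert (Dk : diff1 k) by (eapply diff1_inv; eauto).
  split; auto. intros y Iy.
  set (x := k y). assert (Ix : I01 x) by (apply (inv01_maps_I01 f); auto; apply Df).
  assert (Fx : f x = y) by (apply Hk; auto).
  destruct (Hf x Ix) as [g0 [Gg0 [E0 [l [D1 D1']]]]].
  destruct (proj2 (proj2 HG) g0 Gg0) as [g0' [Gg0' Ig0']].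
  assert (Eg : g0' y = x) by (rewrite <- Fx, <- E0; apply Ig0'; auto).
  exists g0'; split; auto; split; auto.
  destruct (diff1_deriv k y Dk Iy) as [m Hm].
  destruct (diff1_deriv g0' y (HdG _ Gg0') Iy) as [m' Hm'].
  assert (E1 : l * m = 1).
  { apply (right_inverse_deriv f k y); auto; [apply Dk|intros; apply Hk; auto]. }
  assert (E2 : l * m' = 1).
  { apply (right_inverse_deriv g0 g0' y); auto.
    - apply (HdG _ Gg0').
    - intros; apply Ig0'; auto.
    - rewrite Eg; auto. }
  assert (m = m').
  { apply Rmult_eq_reg_l with l; [lra|]. intro Hl; rewrite Hl in E1; lra. }
  subst m'. exists m; auto.
Qed.

(* A map induced by a map tangent to G is tangent to G: it is C^1 with the
   derivative [induced_slope], matched by the identity where h fixes the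
   point and by the element of G matching g elsewhere. *)
Lemma tangent_induced h g : tangent g -> induced h g -> tangent h.
Proof.
  intros [Dg Hg] [Hh Hind].
  pose proof Dg as [Hgh [[Dgf [HD HC]] _]].
  assert (Hfix : forall x, I01 x -> g x = x -> Dgf x = 1).
  { intros x Ix E. eapply deriv01_unique; eauto. apply tangent_no_hyperbolic; auto. split; auto. }
  assert (Dh : forall x, I01 x -> deriv01 h x (induced_slope h Dgf x)).
  { intros; eapply induced_deriv; eauto. }
  split.
  - apply (diff1_of_deriv h (induced_slope h Dgf) Hh Dh).
    + intros; eapply induced_slope_cont; eauto.
    + intros x Ix. destruct (induced_slope_cases h Dgf x) as [[_ ->]|[_ ->]]; [lra|].
      eapply diff1_deriv_nonzero; eauto.
  - intros x Ix. destruct (induced_slope_cases h Dgf x) as [[Hx E]|[Hx E]].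
    + exists (fun y => y). split; [apply HG|]. split; [auto|].
      exists 1; split; [rewrite <- E; auto|apply deriv01_id].
    + destruct (Hind x Ix) as [|Hx']; [contradiction|].
      destruct (Hg x Ix) as [g0 [Gg0 [E0 [l [D1 D1']]]]].
      exists g0; split; auto; split; [congruence|]. exists l; split; auto.
      rewrite <- (deriv01_unique g x _ _ Ix (HD x Ix) D1), <- E; auto.
Qed.

Lemma tangent_Iter n f : Iter n G f -> tangent f.
Proof.
  revert f; induction n as [|n IH]; simpl; intros f Hf; [apply tangent_of_G; auto|].
  induction Hf as [f [g [Gg Ig]]| |f g _ IHf _ IHg|f g _ IHf Ig].
  - eapply tangent_induced; eauto.
  - apply tangent_of_G, HG.
  - apply tangent_comp; auto.
  - eapply tangent_inv; eauto.
Qed.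

End Tangency.

Theorem lemmal (G : (R -> R) -> Prop) :
  is_group G ->
  (forall g, G g -> diff1 g) ->
  no_hyperbolic G ->
  (forall f, Iinf G f -> diff1 f) /\ no_hyperbolic (Iinf G).
Proof.
  intros HG HdG HnG.
  assert (Tangent : forall f, Iinf G f -> tangent G f).
  { intros f [n Hf]. exact (tangent_Iter G HG HdG HnG n f Hf). }
  split.
  - intros f Hf. apply (Tangent f Hf).
  - intros f x Hf Ix Fx. apply (tangent_no_hyperbolic G HnG); auto.
Qed.
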